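(* For all $t,n\in\mathbb N$ we have $d(0,n)=0$ and \begin{align*} &d(4t,4n)=d(2t,2n),\quad d(4t,4n+1)=d(2t,2n),\quad d(4t,4n+2)=d(2t,2n+1),\quad d(4t,4n+3)=d(2t,2n+1),\\ &d(4t+1,4n)=d(2t,2n),\quad d(4t+1,4n+1)=d(2t+1,2n),\quad d(4t+1,4n+2)=d(2t,2n+1)+1,\quad d(4t+1,4n+3)=d(2t+1,2n+1)-1,\\ &d(4t+2,4n)=d(2t+1,2n),\quad d(4t+2,4n+1)=d(2t+1,2n)+1,\quad d(4t+2,4n+2)=d(2t+1,2n+1),\quad d(4t+2,4n+3)=d(2t+1,2n+1)-1,\\ &d(4t+3,4n)=d(2t+1,2n)+1,\quad d(4t+3,4n+1)=d(2t+2,2n),\quad d(4t+3,4n+2)=d(2t+1,2n+1),\quad d(4t+3,4n+3)=d(2t+2,2n+1)-1. \end{align*}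
   Context: For $n\in\mathbb N=\{0,1,2,\dots\}$ with binary digits $\delta_j(n)\in\{0,1\}$ ($n=\sum_j\delta_j(n)2^j$), let $\mathsf r(n)=\#\{j\ge0:\delta_{j+1}(n)=\delta_j(n)=1\}$, the number of (overlapping) occurrences of the block $\mathtt{11}$ in the binary expansion of $n$. Let $d(t,n)=\mathsf r(n+t)-\mathsf r(n)$. *)

From mathcomp Require Import all_boot all_order all_algebra.
Set Implicit Arguments. Unset Strict Implicit. Unset Printing Implicit Defensive.
Import GRing.Theory Num.Theory.

Definition bdigit (j n : nat) : bool := odd (n %/ 2 ^ j).

(* r(n) = #{ j >= 0 : delta_{j+1}(n) = delta_j(n) = 1 }.
   All digits with index j >= n vanish (2^j > n), so summing over j < n
   counts every occurrence. *)
Definition r (n : nat) : nat := \sum_(j < n) (bdigit j.+1 n && bdigit j n).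

Definition d (t n : nat) : int := (r (n + t))%:Z - (r n)%:Z.

From mathcomp Require Import all_boot all_order all_algebra.
From mathcomp Require Import zify.
Import GRing.Theory.

(* Deleting the last binary digit of [N] destroys exactly one block [11] if
   [N] ends in [11] and none otherwise, so [r N = r (N / 2) + [N = 3 mod 4]].
   Applying this once to [n + t] and to [n], with [t = 4 t' + c] and
   [n = 4 n' + e], gives [d t n] in terms of [d] at half the arguments; the
   sixteen identities are the sixteen values of the residues [(c, e)]. *)

Definition ends11 (n : nat) : bool := odd n && odd n./2.

Lemma bdigit_small j n : n < 2 ^ j -> bdigit j n = false.
Proof. by move=> lt_n; rewrite /bdigit divn_small. Qed.

Lemma bdigit0 n : bdigit 0 n = odd n.
Proof. by rewrite /bdigit expn0 divn1. Qed.

Lemma bdigitS j n : bdigit j.+1 n = bdigit j n./2.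
Proof. by rewrite /bdigit expnS divnMA divn2. Qed.

Lemma r_sum_widen n K : n <= K ->
  r n = \sum_(j < K) (bdigit j.+1 n && bdigit j n).
Proof.
move=> le_nK; rewrite /r -!(big_mkord xpredT (fun j => bdigit j.+1 n && bdigit j n : nat)).
rewrite (big_cat_nat (leq0n n) le_nK) /= [X in _ + X]big_nat_cond.
rewrite [X in _ + X]big1 ?addn0 // => j /andP[/andP[le_nj _] _].
by rewrite (@bdigit_small j) ?andbF // (leq_trans (ltn_expl n (ltnSn 1))) // leq_pexp2l.
Qed.

Lemma half_leq_self n : n./2 <= n.
Proof. by rewrite leq_half_double; lia. Qed.

Lemma r_half n : r n = r n./2 + ends11 n.
Proof.
rewrite (r_sum_widen _ _ (leqnSn n)) big_ord_recl (r_sum_widen _ _ (half_leq_self n)) addnC.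
congr (_ + _); first by apply: eq_bigr => i _; rewrite !bdigitS.
by rewrite bdigitS !bdigit0 andbC.
Qed.

Lemma half_mul2nD m x : (2 * m + x)./2 = m + x./2.
Proof. by rewrite halfD mul2n odd_double doubleK. Qed.

Lemma odd_mul2nD m x : odd (2 * m + x) = odd x.
Proof. by rewrite oddD mul2n odd_double. Qed.

Lemma r_quad m x : r (4 * m + x) = r (2 * m + x./2) + ends11 x.
Proof.
have quad : 4 * m + x = 2 * (2 * m) + x by rewrite mulnA.
by rewrite r_half quad /ends11 !half_mul2nD !odd_mul2nD.
Qed.

Local Open Scope ring_scope.

Lemma d_quad t n c e :
  d (4 * t + c) (4 * n + e)
  = d (2 * t + ((e + c)./2 - e./2)) (2 * n + e./2) + (ends11 (e + c))%:Z - (ends11 e)%:Z.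
Proof.
have le_half : (e./2 <= (e + c)./2)%N by apply/half_leq/leq_addr.
rewrite /d addnACA -mulnDr !r_quad.
have -> : (2 * (n + t) + (e + c)./2 = 2 * n + e./2 + (2 * t + ((e + c)./2 - e./2)))%N by lia.
lia.
Qed.

Theorem lemma3p1 : forall t n : nat,
  d 0 n = 0 /\
  d (4*t) (4*n) = d (2*t) (2*n) /\
  d (4*t) (4*n+1) = d (2*t) (2*n) /\
  d (4*t) (4*n+2) = d (2*t) (2*n+1) /\
  d (4*t) (4*n+3) = d (2*t) (2*n+1) /\
  d (4*t+1) (4*n) = d (2*t) (2*n) /\
  d (4*t+1) (4*n+1) = d (2*t+1) (2*n) /\
  d (4*t+1) (4*n+2) = d (2*t) (2*n+1) + 1 /\
  d (4*t+1) (4*n+3) = d (2*t+1) (2*n+1) - 1 /\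
  d (4*t+2) (4*n) = d (2*t+1) (2*n) /\
  d (4*t+2) (4*n+1) = d (2*t+1) (2*n) + 1 /\
  d (4*t+2) (4*n+2) = d (2*t+1) (2*n+1) /\
  d (4*t+2) (4*n+3) = d (2*t+1) (2*n+1) - 1 /\
  d (4*t+3) (4*n) = d (2*t+1) (2*n) + 1 /\
  d (4*t+3) (4*n+1) = d (2*t+2) (2*n) /\
  d (4*t+3) (4*n+2) = d (2*t+1) (2*n+1) /\
  d (4*t+3) (4*n+3) = d (2*t+2) (2*n+1) - 1.
Proof.
move=> t n; split; first by rewrite /d addn0 subrr.
(* [4 * t] is not convertible to [4 * t + 0]: pad the bare multiples so [d_quad] applies. *)
rewrite -![in d (4 * t) _](addn0 (4 * t)%N) -![in d _ (4 * n)](addn0 (4 * n)%N).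
rewrite -![in d (2 * t) _](addn0 (2 * t)%N) -![in d _ (2 * n)](addn0 (2 * n)%N).
by do !split; rewrite d_quad addnE subnE /=; lia.
Qed.
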